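(* For every integer $m\ge 1$ a generalised golden ratio $\mathcal{G}(m)$ exists, and $$\mathcal{G}(m)=\begin{cases} k+1 & \text{if } m=2k,\\[2pt] \dfrac{k+1+\sqrt{k^{2}+6k+5}}{2} & \text{if } m=2k+1,\end{cases}$$ where $k$ is a nonnegative integer.
   Context: Let $m\in\mathbb{N}$ and $\beta\in(1,m+1]$. For $x\in[0,\frac{m}{\beta-1}]$ let $\Sigma_{\beta,m}(x)=\{(\epsilon_i)_{i=1}^\infty\in\{0,\ldots,m\}^{\mathbb{N}}:\sum_{i=1}^\infty \epsilon_i\beta^{-i}=x\}$ be the set of $\beta$-expansions of $x$. A real number $\mathcal{G}(m)$ is called a generalised golden ratio for $m$ if (i) for every $\beta\in(1,\mathcal{G}(m))$ the set $\Sigma_{\beta,m}(x)$ is uncountable for every $x\in(0,\frac{m}{\beta-1})$, and (ii) for every $\beta\in(\mathcal{G}(m),m+1]$ there exists $x\in(0,\frac{m}{\beta-1})$ with $|\Sigma_{\beta,m}(x)|=1$. *)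

From Stdlib Require Import Reals Lra Lia.
Open Scope R_scope.

(* A digit sequence (eps_i)_{i>=1} is encoded as e : nat -> nat with
   eps_{i+1} = e i. *)
Definition digits (m : nat) (e : nat -> nat) : Prop := forall i, (e i <= m)%nat.

Definition is_expansion (beta : R) (m : nat) (x : R) (e : nat -> nat) : Prop :=
  digits m e /\ infinite_sum (fun i => INR (e i) / beta ^ (S i)) x.

Definition Sigma (beta : R) (m : nat) (x : R) : (nat -> nat) -> Prop :=
  fun e => is_expansion beta m x e.

Definition countable_set {T : Type} (S : T -> Prop) : Prop :=
  exists f : T -> nat, forall a b, S a -> S b -> f a = f b -> a = b.

Definition uncountable_set {T : Type} (S : T -> Prop) : Prop := ~ countable_set S.

Definition singleton_set {T : Type} (S : T -> Prop) : Prop :=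
  exists a, S a /\ forall b, S b -> b = a.

Definition is_generalised_golden_ratio (m : nat) (G : R) : Prop :=
  (forall beta, 1 < beta < G ->
     forall x, 0 < x < INR m / (beta - 1) -> uncountable_set (Sigma beta m x)) /\
  (forall beta, G < beta <= INR m + 1 ->
     exists x, 0 < x < INR m / (beta - 1) /\ singleton_set (Sigma beta m x)).

From Stdlib Require Import Reals Lra Lia ClassicalEpsilon FunctionalExtensionality Classical.
Open Scope R_scope.

(* Write M = m/(β-1) and T_d(y) = βy - d. A digit sequence is an expansion of x exactly when
   the orbit of x under the maps T_(ε_i) stays in [0, M]. Call d admissible at y when
   T_d(y) ∈ (0, M), and y a branching point when two digits are admissible there.

   Below the golden ratio no digit lies in [m - c, c], where c = β + 1 - M, and this rules out
   a non-branching point in the band [M - 1, 1]. Hence an orbit that never branches uses the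
   digit 0 forever or m forever and is repelled out of (0, M) by the fixed point 0 or M. So
   branching points recur along every admissible orbit, and spending one bit of an arbitrary
   boolean sequence at each of them embeds the Cantor space into the expansions of x.

   Above the golden ratio the orbit of a fixed point (m = 2k), resp. of a 2-cycle with digits
   k+1, k (m = 2k+1), stays in the band (M - 1, 1), where the digit of every expansion is
   determined by the position; so that point has a unique expansion. *)

Lemma pow_unbounded (b a B : R) :
  1 < b -> 0 < a -> exists N, forall n, (N <= n)%nat -> B < b ^ n * a.
Proof.
  intros Hb Ha.
  destruct (Pow_x_infinity b ltac:(rewrite Rabs_right; lra) (Rabs B / a + 1)) as [N HN].
  exists N; intros n Hn. specialize (HN n Hn).
  rewrite Rabs_right in HN by (apply Rle_ge, pow_le; lra).
  assert (B <= Rabs B) by apply Rle_abs.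
  assert (Rabs B / a * a = Rabs B) by (field; lra).
  assert ((Rabs B / a + 1) * a <= b ^ n * a) by (apply Rmult_le_compat_r; lra).
  nra.
Qed.

Lemma Un_cv_const (c : R) : Un_cv (fun _ => c) c.
Proof. intros eps Heps. exists 0%nat. intros. unfold Rdist. rewrite Rminus_diag, Rabs_R0. lra. Qed.

Lemma INR_close_eq (p q : nat) : INR p - INR q < 1 -> INR q - INR p < 1 -> p = q.
Proof.
  intros H1 H2. destruct (Nat.lt_total p q) as [H|[H|H]]; auto;
    apply le_INR in H; rewrite S_INR in H; lra.
Qed.

Lemma no_injection_bool_sequences_nat (g : (nat -> bool) -> nat) :
  ~ (forall s t, g s = g t -> s = t).
Proof.
  intros Hg.
  set (h n := epsilon (inhabits (fun _ : nat => true)) (fun s => g s = n)).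
  set (d n := negb (h n n)).
  assert (Hh : h (g d) = d).
  { apply Hg. apply (epsilon_spec _ (fun s => g s = g d)). now exists d. }
  assert (E : d (g d) = negb (h (g d) (g d))) by reflexivity.
  rewrite Hh in E. destruct (d (g d)); discriminate.
Qed.

Lemma nat_below_within_one (n : nat) (z : R) :
  0 < z <= INR n -> exists d, (d < n)%nat /\ 0 < z - INR d <= 1.
Proof.
  revert z; induction n as [|n IH]; intros z Hz; [simpl in Hz; lra|].
  rewrite S_INR in Hz.
  destruct (Rle_dec z (INR n)) as [H|H].
  - destruct (IH z) as [d [Hd Hz']]; [lra|]. exists d; split; [lia|exact Hz'].
  - exists n. split; [lia|lra].
Qed.

Fixpoint orbit {X : Type} (step : X -> nat -> X) (x : X) (e : nat -> nat) (n : nat) : X :=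
  match n with
  | O => x
  | S n => step (orbit step x e n) (e n)
  end.

Lemma orbit_add {X : Type} (step : X -> nat -> X) (x : X) (e : nat -> nat) (n k : nat) :
  orbit step x e (n + k) = orbit step (orbit step x e n) (fun i => e (n + i)%nat) k.
Proof.
  induction k as [|k IH]; simpl.
  - now rewrite Nat.add_0_r.
  - now rewrite Nat.add_succ_r; simpl; rewrite IH.
Qed.

Section BranchingPaths.

Context {X : Type} (good : X -> Prop) (ok : X -> nat -> Prop) (step : X -> nat -> X).

Definition branching (y : X) : Prop := exists d0 d1, d0 <> d1 /\ ok y d0 /\ ok y d1.

Definition admissible_from (x : X) (e : nat -> nat) : Prop :=
  forall n, ok (orbit step x e n) (e n).

Hypothesis step_good : forall y d, good y -> ok y d -> good (step y d).
Hypothesis ok_exists : forall y, good y -> exists d, ok y d.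
Hypothesis branching_recurs :
  forall x e, good x -> admissible_from x e -> exists n, branching (orbit step x e n).

Lemma branching_recurs_after (x : X) (e : nat -> nat) :
  good x -> admissible_from x e -> forall n0, exists k, branching (orbit step x e (n0 + k)).
Proof.
  intros Hx He n0.
  assert (Hgood : forall n, good (orbit step x e n)).
  { induction n as [|n IH]; [exact Hx | now apply step_good]. }
  destruct (branching_recurs (orbit step x e n0) (fun i => e (n0 + i)%nat)) as [k Hk].
  - apply Hgood.
  - intro k. rewrite <- orbit_add. apply He.
  - exists k. now rewrite orbit_add.
Qed.

Definition is_branching (y : X) : bool :=
  if excluded_middle_informative (branching y) then true else false.

Lemma is_branchingP (y : X) : reflect (branching y) (is_branching y).
Proof. unfold is_branching. destruct excluded_middle_informative; now constructor. Qed.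

Definition branch_pair (y : X) : nat * nat :=
  epsilon (inhabits (0, 0)%nat) (fun p => fst p <> snd p /\ ok y (fst p) /\ ok y (snd p)).

Definition choose_digit (y : X) (bit : bool) : nat :=
  if is_branching y then (if bit then fst (branch_pair y) else snd (branch_pair y))
  else epsilon (inhabits 0%nat) (ok y).

Lemma branch_pair_spec (y : X) :
  branching y -> fst (branch_pair y) <> snd (branch_pair y)
                 /\ ok y (fst (branch_pair y)) /\ ok y (snd (branch_pair y)).
Proof.
  intros [d0 [d1 H]].
  apply (epsilon_spec _ (fun p => fst p <> snd p /\ ok y (fst p) /\ ok y (snd p))).
  now exists (d0, d1).
Qed.

Lemma choose_digit_ok (y : X) (bit : bool) : good y -> ok y (choose_digit y bit).
Proof.
  intro Hy. unfold choose_digit. destruct (is_branchingP y) as [Hb|_].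
  - destruct (branch_pair_spec y Hb) as [_ [H0 H1]]. now destruct bit.
  - now apply epsilon_spec, ok_exists.
Qed.

Lemma choose_digit_inj (y : X) (bit bit' : bool) :
  branching y -> choose_digit y bit = choose_digit y bit' -> bit = bit'.
Proof.
  intros Hb. unfold choose_digit. destruct (is_branchingP y) as [_|]; [|contradiction].
  destruct (branch_pair_spec y Hb) as [Hne _].
  destruct bit, bit'; auto; intro E; contradict Hne; auto.
Qed.

(* A walk spends the next bit of [s] at every branching point; its second component counts
   the bits spent so far. *)
Fixpoint walk (x : X) (s : nat -> bool) (n : nat) : X * nat :=
  match n with
  | O => (x, O)
  | S n =>
      let p := walk x s n in
      (step (fst p) (choose_digit (fst p) (s (snd p))),
       if is_branching (fst p) then S (snd p) else snd p)
  end.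

Definition walk_digits (x : X) (s : nat -> bool) (n : nat) : nat :=
  choose_digit (fst (walk x s n)) (s (snd (walk x s n))).

Lemma walk_orbit (x : X) (s : nat -> bool) (n : nat) :
  fst (walk x s n) = orbit step x (walk_digits x s) n.
Proof. induction n as [|n IH]; simpl; [reflexivity|]. now rewrite <- IH. Qed.

Lemma walk_digits_admissible (x : X) (s : nat -> bool) :
  good x -> admissible_from x (walk_digits x s).
Proof.
  intros Hx.
  assert (Hgood : forall n, good (fst (walk x s n))).
  { induction n as [|n IH]; [exact Hx|]. apply step_good; [exact IH|]. now apply choose_digit_ok. }
  intro n. rewrite <- walk_orbit. now apply choose_digit_ok.
Qed.

Lemma walk_spends_every_bit (x : X) (s : nat -> bool) :
  good x -> forall p, exists n, snd (walk x s n) = p /\ branching (fst (walk x s n)).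
Proof.
  intros Hx.
  assert (Hrec : forall n0, exists k, branching (fst (walk x s (n0 + k)))).
  { intro n0. destruct (branching_recurs_after x (walk_digits x s)
                          Hx (walk_digits_admissible x s Hx) n0) as [k Hk].
    exists k. now rewrite walk_orbit. }
  assert (Hnext : forall k n0, branching (fst (walk x s (n0 + k))) ->
            exists n, snd (walk x s n) = snd (walk x s n0) /\ branching (fst (walk x s n))).
  { induction k as [|k IH]; intros n0 Hk.
    - exists n0. rewrite Nat.add_0_r in Hk. now split.
    - destruct (classic (branching (fst (walk x s n0)))) as [Hb|Hnb]; [now exists n0|].
      rewrite <- Nat.add_succ_comm in Hk.
      destruct (IH (S n0) Hk) as [n [Hn Hbn]]. exists n. split; [|exact Hbn].
      rewrite Hn. simpl. now destruct (is_branchingP (fst (walk x s n0))). }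
  induction p as [|p [n [Hn Hb]]].
  - destruct (Hrec 0%nat) as [k Hk]. exact (Hnext k 0%nat Hk).
  - destruct (Hrec (S n)) as [k Hk]. destruct (Hnext k (S n) Hk) as [n' [Hn' Hb']].
    exists n'. split; [|exact Hb']. rewrite Hn'. simpl.
    destruct (is_branchingP (fst (walk x s n))); [now rewrite Hn | contradiction].
Qed.

Lemma walk_digits_injective (x : X) (s t : nat -> bool) :
  good x -> walk_digits x s = walk_digits x t -> s = t.
Proof.
  intros Hx E.
  assert (Hpos : forall n, fst (walk x s n) = fst (walk x t n)).
  { intro n. now rewrite !walk_orbit, E. }
  assert (Hcount : forall n, snd (walk x s n) = snd (walk x t n)).
  { induction n as [|n IH]; simpl; [reflexivity|]. now rewrite Hpos, IH. }
  apply functional_extensionality. intro p.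
  destruct (walk_spends_every_bit x s Hx p) as [n [Hn Hb]].
  apply (choose_digit_inj (fst (walk x s n))); [exact Hb|].
  generalize (f_equal (fun f => f n) E). unfold walk_digits.
  now rewrite <- Hpos, <- Hcount, Hn.
Qed.

Theorem admissible_from_uncountable (x : X) : good x -> uncountable_set (admissible_from x).
Proof.
  intros Hx [f Hf].
  apply (no_injection_bool_sequences_nat (fun s => f (walk_digits x s))).
  intros s t E. apply (walk_digits_injective x); [exact Hx|].
  apply Hf; auto using walk_digits_admissible.
Qed.

End BranchingPaths.

Definition beta_step (b y : R) (d : nat) : R := b * y - INR d.

Fixpoint partial_sum (b : R) (e : nat -> nat) (n : nat) : R :=
  match n with
  | O => 0
  | S n => partial_sum b e n + INR (e n) / b ^ S n
  end.

Section BetaExpansions.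

Variables (m : nat) (b : R).
Hypothesis b_gt_1 : 1 < b.

Local Notation M := (INR m / (b - 1)).
Local Notation orbit_b := (orbit (beta_step b)).

Lemma top_fixed : b * M = INR m + M.
Proof. field; lra. Qed.

Lemma top_nonneg : 0 <= M.
Proof. apply Rmult_le_pos; [apply pos_INR | left; apply Rinv_0_lt_compat; lra]. Qed.

Lemma orbit_partial_sum (x : R) (e : nat -> nat) (n : nat) :
  orbit_b x e n = b ^ n * (x - partial_sum b e n).
Proof.
  induction n as [|n IH]; simpl; [ring|].
  rewrite IH. unfold beta_step.
  assert (b ^ n <> 0) by (apply pow_nonzero; lra).
  field; lra.
Qed.

Lemma sum_f_R0_partial_sum (e : nat -> nat) (N : nat) :
  sum_f_R0 (fun i => INR (e i) / b ^ S i) N = partial_sum b e (S N).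
Proof. induction N as [|N IH]; [simpl; ring|]. now rewrite tech5, IH. Qed.

Lemma expansion_of_bounded_orbit (x B : R) (e : nat -> nat) :
  (forall n, Rabs (orbit_b x e n) <= B) -> infinite_sum (fun i => INR (e i) / b ^ S i) x.
Proof.
  intros HB eps Heps.
  destruct (pow_unbounded b eps B b_gt_1 Heps) as [N HN].
  exists N. intros n Hn. unfold Rdist.
  rewrite sum_f_R0_partial_sum.
  assert (Hp : 0 < b ^ S n) by (apply pow_lt; lra).
  replace (partial_sum b e (S n) - x) with (- (orbit_b x e (S n) / b ^ S n))
    by (rewrite orbit_partial_sum; field; lra).
  rewrite Rabs_Ropp. unfold Rdiv. rewrite Rabs_mult, Rabs_inv, (Rabs_right (b ^ S n)) by lra.
  apply (Rmult_lt_reg_r (b ^ S n)); [exact Hp|].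
  rewrite Rmult_assoc, Rinv_l by lra.
  specialize (HB (S n)). specialize (HN (S n) ltac:(lia)). lra.
Qed.

Lemma partial_sum_increment (e : nat -> nat) :
  digits m e -> forall n k,
    0 <= partial_sum b e (n + k) - partial_sum b e n <= M / b ^ n - M / b ^ (n + k).
Proof.
  intros He n k. induction k as [|k IH].
  - rewrite Nat.add_0_r. lra.
  - rewrite Nat.add_succ_r. change (partial_sum b e (S (n + k)))
      with (partial_sum b e (n + k) + INR (e (n + k)%nat) / b ^ S (n + k)).
    assert (Hp : 0 < b ^ (n + k)) by (apply pow_lt; lra).
    assert (Hstep : M / b ^ (n + k) - M / b ^ S (n + k) = INR m / b ^ S (n + k))
      by (simpl; field; lra).
    assert (0 <= INR (e (n + k)%nat) <= INR m) by (split; [apply pos_INR | apply le_INR, He]).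
    assert (Hq : 0 < / b ^ S (n + k)) by (apply Rinv_0_lt_compat, pow_lt; lra).
    assert (0 <= INR (e (n + k)%nat) / b ^ S (n + k) <= INR m / b ^ S (n + k))
      by (unfold Rdiv; split; [apply Rmult_le_pos | apply Rmult_le_compat_r]; lra).
    lra.
Qed.

Lemma expansion_orbit_bounds (x : R) (e : nat -> nat) :
  is_expansion b m x e -> forall n, 0 <= orbit_b x e n <= M.
Proof.
  intros [Hd Hs] n.
  assert (Hp : 0 < b ^ n) by (apply pow_lt; lra).
  pose proof (CV_shift' _ n x Hs) as Hshift.
  assert (Hbound : forall N, partial_sum b e n <= sum_f_R0 (fun i => INR (e i) / b ^ S i) (N + n)
                             <= partial_sum b e n + M / b ^ n).
  { intro N. rewrite sum_f_R0_partial_sum, <- Nat.add_succ_l, Nat.add_comm.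
    pose proof (partial_sum_increment e Hd n (S N)).
    assert (0 <= M / b ^ (n + S N)).
    { apply Rmult_le_pos; [apply top_nonneg | left; apply Rinv_0_lt_compat, pow_lt; lra]. }
    lra. }
  assert (Hlo : partial_sum b e n <= x)
    by exact (Rle_cv_lim (fun N => proj1 (Hbound N)) (Un_cv_const _) Hshift).
  assert (Hhi : x <= partial_sum b e n + M / b ^ n)
    by exact (Rle_cv_lim (fun N => proj2 (Hbound N)) Hshift (Un_cv_const _)).
  rewrite orbit_partial_sum. split; [apply Rmult_le_pos; lra|].
  assert (Hscaled : b ^ n * (x - partial_sum b e n) <= b ^ n * (M / b ^ n))
    by (apply Rmult_le_compat_l; lra).
  replace (b ^ n * (M / b ^ n)) with M in Hscaled by (field; lra).
  exact Hscaled.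
Qed.

(* Two orbit points βy - e and βy - a with the first in [0, M] and the second in
   (M - 1, 1) differ by less than 1, so the digits agree. *)
Lemma expansion_eq_of_band_orbit (x : R) (a e : nat -> nat) :
  (forall n, M - 1 < orbit_b x a n < 1) -> is_expansion b m x e -> e = a.
Proof.
  intros Hband He.
  assert (Hdigit : forall n, orbit_b x e n = orbit_b x a n -> e n = a n).
  { intros n Hn.
    pose proof (expansion_orbit_bounds x e He (S n)) as He'. pose proof (Hband (S n)) as Ha'.
    simpl in He', Ha'. rewrite Hn in He'. unfold beta_step in *.
    apply INR_close_eq; lra. }
  assert (Horbit : forall n, orbit_b x e n = orbit_b x a n).
  { induction n as [|n IH]; simpl; [reflexivity|]. now rewrite IH, (Hdigit n IH). }
  apply functional_extensionality. intro n. exact (Hdigit n (Horbit n)).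
Qed.

Lemma singleton_of_band_orbit (x : R) (a : nat -> nat) :
  digits m a -> (forall n, M - 1 < orbit_b x a n < 1) -> singleton_set (Sigma b m x).
Proof.
  intros Ha Hband. exists a. split.
  - split; [exact Ha|].
    apply (expansion_of_bounded_orbit x (1 + Rabs (M - 1))).
    intro n. specialize (Hband n). apply Rabs_le. split_Rabs; lra.
  - intros e He. exact (expansion_eq_of_band_orbit x a e Hband He).
Qed.

Lemma orbit_constant_digit (x : R) (e : nat -> nat) (d : nat) :
  (forall n, e n = d) ->
  forall n, orbit_b x e n - INR d / (b - 1) = b ^ n * (x - INR d / (b - 1)).
Proof.
  intros Hd n. induction n as [|n IH]; [simpl; ring|].
  change (orbit_b x e (S n)) with (b * orbit_b x e n - INR (e n)). rewrite Hd.
  replace (b * orbit_b x e n - INR d - INR d / (b - 1))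
    with (b * (orbit_b x e n - INR d / (b - 1))) by (field; lra).
  rewrite IH. simpl. ring.
Qed.

Lemma orbit_constant_digit_escapes (x B : R) (e : nat -> nat) (d : nat) :
  (forall n, e n = d) -> x <> INR d / (b - 1) ->
  exists n, B < Rabs (orbit_b x e n - INR d / (b - 1)).
Proof.
  intros Hd Hx.
  destruct (pow_unbounded b (Rabs (x - INR d / (b - 1))) B b_gt_1) as [N HN].
  { apply Rabs_pos_lt. lra. }
  exists N. rewrite orbit_constant_digit by exact Hd.
  rewrite Rabs_mult, (Rabs_right (b ^ N)) by (apply Rle_ge, pow_le; lra).
  now apply HN.
Qed.

Definition admissible_digit (y : R) (d : nat) : Prop := (d <= m)%nat /\ 0 < beta_step b y d < M.

Lemma admissible_path_is_expansion (x : R) (e : nat -> nat) :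
  0 < x < M -> admissible_from admissible_digit (beta_step b) x e -> Sigma b m x e.
Proof.
  intros Hx He. split; [intro i; apply He|].
  apply (expansion_of_bounded_orbit x M). intros [|n]; simpl.
  - rewrite Rabs_right; lra.
  - destruct (He n) as [_ Hn]. rewrite Rabs_right; lra.
Qed.

Lemma admissible_digit_exists (y : R) : 1 < M -> 0 < y < M -> exists d, admissible_digit y d.
Proof.
  intros HM Hy. pose proof top_fixed. unfold admissible_digit, beta_step.
  destruct (Rle_dec (b * y) (INR m)) as [Hle|Hgt].
  - destruct (nat_below_within_one m (b * y)) as [d [Hd Hz]]; [nra|].
    exists d. split; [lia|lra].
  - exists m. split; [lia|nra].
Qed.

Lemma nonbranching_digit_below_one (y : R) (d : nat) :
  ~ branching admissible_digit y -> admissible_digit y d -> (d < m)%nat -> b * y - INR d <= 1.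
Proof.
  intros Hnb [Hd Hy] Hlt. apply Rnot_lt_le. intro H. apply Hnb.
  exists d, (S d). unfold admissible_digit, beta_step in *. rewrite S_INR.
  repeat split; try lia; lra.
Qed.

Lemma nonbranching_digit_above_band (y : R) (d : nat) :
  ~ branching admissible_digit y -> admissible_digit y d -> (0 < d)%nat -> M - 1 <= b * y - INR d.
Proof.
  intros Hnb [Hd Hy] Hlt. destruct d as [|d]; [lia|].
  apply Rnot_lt_le. intro H. apply Hnb.
  exists d, (S d). unfold admissible_digit, beta_step in *. rewrite S_INR in *.
  repeat split; try lia; lra.
Qed.

Definition low_digit (e : nat) : Prop := (e < m)%nat /\ INR e < INR m - (b + 1 - M).
Definition high_digit (e : nat) : Prop := (0 < e)%nat /\ b + 1 - M < INR e.

Definition digit_gap : Prop := forall e, (e <= m)%nat -> low_digit e \/ high_digit e.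

Lemma digit_gap_of_threshold (h : nat) :
  (1 <= h <= m)%nat -> b + 1 - M < INR h -> b + 1 - M < INR m - INR h + 1 -> digit_gap.
Proof.
  intros Hh H1 H2 e He. destruct (Nat.lt_ge_cases e h) as [Hlt|Hge].
  - left. split; [lia|]. apply le_INR in Hlt. rewrite S_INR in Hlt. lra.
  - right. split; [lia|]. apply le_INR in Hge. lra.
Qed.

Lemma not_high_digit_below_one (y : R) (e : nat) :
  ~ branching admissible_digit y -> admissible_digit y e -> y <= 1 -> ~ high_digit e.
Proof.
  intros Hnb He Hy [Hpos Hhigh].
  pose proof (nonbranching_digit_above_band y e Hnb He Hpos). nra.
Qed.

Lemma not_low_digit_above_band (y : R) (e : nat) :
  ~ branching admissible_digit y -> admissible_digit y e -> M - 1 <= y -> ~ low_digit e.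
Proof.
  intros Hnb He Hy [Hlt Hlow].
  pose proof (nonbranching_digit_below_one y e Hnb He Hlt). pose proof top_fixed. nra.
Qed.

Lemma nonbranching_orbit_digit_constant (x : R) (e : nat -> nat) :
  digit_gap -> admissible_from admissible_digit (beta_step b) x e ->
  (forall n, ~ branching admissible_digit (orbit_b x e n)) ->
  exists d, (d = 0 \/ d = m)%nat /\ forall n, e n = d.
Proof.
  intros Hgap He Hnb.
  assert (Hm : (0 < m)%nat) by (destruct (Hgap 0%nat) as [[H _]|[H _]]; lia).
  assert (Hle : forall n, (e n <= m)%nat) by (intro n; apply He).
  (* After a digit below m the orbit is at most 1, after a positive digit at least M - 1,
     and there the next digit cannot be high, resp. low. *)
  assert (Hstays_low : forall n, (e n < m)%nat -> (e (S n) < m)%nat).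
  { intros n Hn.
    pose proof (nonbranching_digit_below_one _ _ (Hnb n) (He n) Hn) as Hbelow.
    destruct (Hgap (e (S n)) (Hle (S n))) as [[Hlt _]|Hhigh]; [exact Hlt|].
    destruct (not_high_digit_below_one _ _ (Hnb (S n)) (He (S n)) Hbelow Hhigh). }
  assert (Hstays_high : forall n, (0 < e n)%nat -> (0 < e (S n))%nat).
  { intros n Hn.
    pose proof (nonbranching_digit_above_band _ _ (Hnb n) (He n) Hn) as Habove.
    destruct (Hgap (e (S n)) (Hle (S n))) as [Hlow|[Hpos _]]; [|exact Hpos].
    destruct (not_low_digit_above_band _ _ (Hnb (S n)) (He (S n)) Habove Hlow). }
  assert (Hextreme : forall n, (e n < m)%nat -> e n = 0%nat).
  { intros n Hlo. destruct (Nat.eq_dec (e n) 0) as [|Hne]; [assumption|exfalso].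
    pose proof (nonbranching_digit_below_one _ _ (Hnb n) (He n) Hlo) as Hbelow.
    pose proof (nonbranching_digit_above_band _ _ (Hnb n) (He n) ltac:(lia)) as Habove.
    destruct (Hgap (e (S n)) (Hle (S n))) as [Hlow|Hhigh].
    - exact (not_low_digit_above_band _ _ (Hnb (S n)) (He (S n)) Habove Hlow).
    - exact (not_high_digit_below_one _ _ (Hnb (S n)) (He (S n)) Hbelow Hhigh). }
  destruct (Nat.lt_ge_cases (e 0%nat) m) as [H0|H0].
  - exists 0%nat. split; [now left|].
    assert (Hall : forall n, (e n < m)%nat) by (induction n; auto).
    intro n. exact (Hextreme n (Hall n)).
  - exists m. split; [now right|].
    assert (Hall : forall n, (0 < e n)%nat) by (induction n; auto; lia).
    intro n. destruct (Nat.lt_ge_cases (e n) m) as [H|H]; [|specialize (Hle n); lia].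
    specialize (Hextreme n H). specialize (Hall n). lia.
Qed.

Lemma branching_recurs_of_gap (x : R) (e : nat -> nat) :
  digit_gap -> 0 < x < M -> admissible_from admissible_digit (beta_step b) x e ->
  exists n, branching admissible_digit (orbit_b x e n).
Proof.
  intros Hgap Hx He. apply NNPP. intro Hno.
  destruct (nonbranching_orbit_digit_constant x e Hgap He) as [d [Hd Hconst]].
  { intros n Hn. apply Hno. now exists n. }
  assert (Hfix : INR d / (b - 1) = 0 \/ INR d / (b - 1) = M)
    by (destruct Hd as [-> | ->]; [left; simpl; field; lra | now right]).
  destruct (orbit_constant_digit_escapes x M e d Hconst) as [n Hn]; [lra|].
  assert (Hy : 0 < orbit_b x e n < M) by (destruct n as [|n]; [exact Hx | apply He]).
  revert Hn. apply Rle_not_lt. apply Rabs_le. lra.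
Qed.

Theorem beta_expansions_uncountable (x : R) :
  1 < M -> digit_gap -> 0 < x < M -> uncountable_set (Sigma b m x).
Proof.
  intros HM Hgap Hx [f Hf].
  apply (admissible_from_uncountable (fun y => 0 < y < M) admissible_digit (beta_step b))
    with x; [| | | exact Hx |].
  - intros y d _ [_ H]. exact H.
  - intros y Hy. now apply admissible_digit_exists.
  - intros x' e Hx' He. now apply branching_recurs_of_gap.
  - exists f. intros e1 e2 H1 H2. apply Hf; now apply admissible_path_is_expansion.
Qed.

End BetaExpansions.

Lemma even_digit_gap (k : nat) (b : R) :
  (1 <= k)%nat -> 1 < b < INR k + 1 ->
  1 < INR (2 * k) / (b - 1) /\ digit_gap (2 * k) b.
Proof.
  intros Hk Hb.
  assert (HK : 1 <= INR k) by (apply (le_INR 1); auto).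
  assert (Hm : INR (2 * k) = 2 * INR k) by (rewrite mult_INR; simpl; ring).
  assert (HE : INR (2 * k) / (b - 1) * (b - 1) = INR (2 * k)) by (field; lra).
  rewrite Hm in HE |- *. set (M := 2 * INR k / (b - 1)) in *.
  assert (HM : 1 < M) by nra.
  split; [exact HM|].
  apply (digit_gap_of_threshold (2 * k) b k); [lia | |]; rewrite Hm; fold M; nra.
Qed.

Lemma odd_digit_gap (k : nat) (b : R) :
  1 < b -> b * b - (INR k + 1) * b - (INR k + 1) < 0 ->
  1 < INR (2 * k + 1) / (b - 1) /\ digit_gap (2 * k + 1) b.
Proof.
  intros Hb Hq.
  assert (HK : 0 <= INR k) by apply pos_INR.
  assert (Hm : INR (2 * k + 1) = 2 * INR k + 1)
    by (rewrite plus_INR, mult_INR; simpl; ring).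
  assert (HE : INR (2 * k + 1) / (b - 1) * (b - 1) = INR (2 * k + 1)) by (field; lra).
  rewrite Hm in HE |- *. set (M := (2 * INR k + 1) / (b - 1)) in *.
  assert (HM : 1 < M) by nra.
  split; [exact HM|].
  apply (digit_gap_of_threshold (2 * k + 1) b (S k)); [lia | |];
    rewrite Hm, S_INR; fold M; nra.
Qed.

Lemma even_unique_expansion (k : nat) (b : R) :
  (1 <= k)%nat -> INR k + 1 < b ->
  exists x, 0 < x < INR (2 * k) / (b - 1) /\ singleton_set (Sigma b (2 * k) x).
Proof.
  intros Hk Hb.
  assert (HK : 1 <= INR k) by (apply (le_INR 1); auto).
  assert (Hm : INR (2 * k) = 2 * INR k) by (rewrite mult_INR; simpl; ring).
  set (p := INR k / (b - 1)).
  assert (Hp : 0 < p < 1).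
  { unfold p. split; [apply Rdiv_lt_0_compat; lra|].
    apply (Rmult_lt_reg_r (b - 1)); [lra|]. field_simplify; lra. }
  assert (HM : INR (2 * k) / (b - 1) = 2 * p) by (unfold p; rewrite Hm; field; lra).
  assert (Horbit : forall n, orbit (beta_step b) p (fun _ => k) n = p).
  { intro n. pose proof (orbit_constant_digit b ltac:(lra) p (fun _ => k) k
                           (fun _ => eq_refl) n) as H.
    fold p in H. lra. }
  exists p. rewrite HM. split; [lra|].
  apply (singleton_of_band_orbit (2 * k) b ltac:(lra) p (fun _ => k)).
  - intro i. lia.
  - intro n. rewrite Horbit, HM. lra.
Qed.

Lemma odd_unique_expansion (k : nat) (b : R) :
  1 < b -> 0 < b * b - (INR k + 1) * b - (INR k + 1) ->
  exists x, 0 < x < INR (2 * k + 1) / (b - 1) /\ singleton_set (Sigma b (2 * k + 1) x).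
Proof.
  intros Hb Hq.
  assert (HK : 0 <= INR k) by apply pos_INR.
  assert (Hm : INR (2 * k + 1) = 2 * INR k + 1)
    by (rewrite plus_INR, mult_INR; simpl; ring).
  set (K := INR k) in *.
  (* The 2-cycle p -> bp - (k+1) = q -> bq - k = p. *)
  set (p := ((K + 1) * b + K) / (b * b - 1)).
  set (q := (K * b + K + 1) / (b * b - 1)).
  assert (Hbb : 0 < b * b - 1) by nra.
  assert (Hp1 : p < 1).
  { assert (1 - p = (b * b - (K + 1) * b - (K + 1)) / (b * b - 1)) by (unfold p; field; lra).
    assert (0 < (b * b - (K + 1) * b - (K + 1)) / (b * b - 1)) by (apply Rdiv_lt_0_compat; lra).
    lra. }
  assert (Hqp : q < p).
  { assert (p - q = (b - 1) / (b * b - 1)) by (unfold p, q; field; lra).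
    assert (0 < (b - 1) / (b * b - 1)) by (apply Rdiv_lt_0_compat; lra). lra. }
  assert (Hq0 : 0 < q) by (apply Rdiv_lt_0_compat; nra).
  assert (HM : INR (2 * k + 1) / (b - 1) = p + q)
    by (unfold p, q; rewrite Hm; field; lra).
  set (a n := if Nat.even n then S k else k).
  assert (Horbit : forall n, orbit (beta_step b) p a n = if Nat.even n then p else q).
  { induction n as [|n IH]; [reflexivity|].
    change (orbit (beta_step b) p a (S n)) with (b * orbit (beta_step b) p a n - INR (a n)).
    rewrite IH. unfold a. rewrite Nat.even_succ, <- Nat.negb_even.
    destruct (Nat.even n); cbn [negb]; [rewrite S_INR|]; fold K; unfold p, q; field; lra. }
  exists p. rewrite HM. split; [lra|].
  apply (singleton_of_band_orbit (2 * k + 1) b Hb p a).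
  - intro i. unfold a. destruct (Nat.even i); lia.
  - intro n. rewrite Horbit, HM. destruct (Nat.even n); lra.
Qed.

Lemma odd_golden_ratio_gt (K : R) :
  0 <= K -> K + 1 < (K + 1 + sqrt (K ^ 2 + 6 * K + 5)) / 2.
Proof.
  intro HK.
  assert (Hs : sqrt (K ^ 2 + 6 * K + 5) * sqrt (K ^ 2 + 6 * K + 5) = K ^ 2 + 6 * K + 5)
    by (apply sqrt_sqrt; nra).
  pose proof (sqrt_pos (K ^ 2 + 6 * K + 5)). nra.
Qed.

Lemma odd_golden_ratio_quadratic_sign (K b : R) :
  0 <= K -> 0 < b ->
  let G := (K + 1 + sqrt (K ^ 2 + 6 * K + 5)) / 2 in
  (b < G -> b * b - (K + 1) * b - (K + 1) < 0) /\
  (G < b -> 0 < b * b - (K + 1) * b - (K + 1)).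
Proof.
  intros HK Hb G.
  set (s := sqrt (K ^ 2 + 6 * K + 5)) in G.
  assert (Hs : s * s = K ^ 2 + 6 * K + 5) by (apply sqrt_sqrt; nra).
  assert (0 <= s) by apply sqrt_pos.
  assert (Hfactor : b * b - (K + 1) * b - (K + 1) = (b - G) * (b - (K + 1 - s) / 2))
    by (unfold G; nra).
  assert (0 < b - (K + 1 - s) / 2) by nra.
  rewrite Hfactor. split; intro; nra.
Qed.

Theorem theorem1p1 :
  forall m : nat, (1 <= m)%nat ->
    exists G : R, is_generalised_golden_ratio m G /\
      (forall k : nat, m = (2 * k)%nat -> G = INR k + 1) /\
      (forall k : nat, m = (2 * k + 1)%nat ->
         G = (INR k + 1 + sqrt (INR k ^ 2 + 6 * INR k + 5)) / 2).
Proof.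
  intros m Hm. destruct (Nat.Even_or_Odd m) as [[k ->]|[k ->]].
  - exists (INR k + 1). split; [split|split].
    + intros b Hb x Hx. destruct (even_digit_gap k b) as [HM Hgap]; [lia|lra|].
      apply beta_expansions_uncountable; [lra | exact HM | exact Hgap | exact Hx].
    + intros b [Hb _]. apply even_unique_expansion; [lia|lra].
    + intros k' Hk'. now replace k' with k by lia.
    + intros k' Hk'. lia.
  - pose proof (pos_INR k) as HK.
    pose proof (odd_golden_ratio_gt (INR k) HK) as HG.
    exists ((INR k + 1 + sqrt (INR k ^ 2 + 6 * INR k + 5)) / 2). split; [split|split].
    + intros b Hb x Hx. destruct (odd_digit_gap k b) as [HM Hgap]; [lra| |].
      * apply (proj1 (odd_golden_ratio_quadratic_sign (INR k) b HK ltac:(lra))); lra.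
      * apply beta_expansions_uncountable; [lra | exact HM | exact Hgap | exact Hx].
    + intros b [Hb _]. apply odd_unique_expansion; [lra|].
      apply (proj2 (odd_golden_ratio_quadratic_sign (INR k) b HK ltac:(lra))); lra.
    + intros k' Hk'. lia.
    + intros k' Hk'. now replace k' with k by lia.
Qed.
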